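(* Let $G$ be a simple graph with $m$ edges and girth $g(G)>3$. Then $$\gamma(G)=2EM_2(G)-\beta(G)+4EM_1(G)-2F(G)+6M_1(G)-8m.$$
   Context: All graphs are finite, simple and undirected; $d_G(v)$ is the degree of $v$. $M_1(G)=\sum_v d_G(v)^2$, $F(G)=\sum_v d_G(v)^3$. For an edge $e=uv$, $d_G(e)=d_G(u)+d_G(v)-2$. Write $e\sim f$ for two distinct edges sharing a vertex and $e\cap f$ for that vertex; sums over $e\sim f$ are over unordered pairs. $EM_1(G)=\sum_{e\in E(G)}d_G(e)^2$, $EM_2(G)=\sum_{e\sim f}d_G(e)d_G(f)$, $\beta(G)=\sum_{e\sim f}d_G(e\cap f)(d_G(e)+d_G(f))$. A vertex $v$ is incident to an edge $e=xy$ ($v\ne x,y$) if $\{vx,vy\}\cap E(G)\ne\emptyset$; $\Lambda(G)$ is the set of pairs $\{v,e\}$ with $v$ incident to $e$ in this sense; $\gamma(G)=\sum_{\{v,xy\}\in\Lambda(G)}d_G(v)[d_G(x)+d_G(y)]$. *)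

(* A finite simple graph is a symmetric irreflexive relation
   [adj] on a finite vertex type [T]. Edges are 2-element vertex sets. *)
From mathcomp Require Import all_boot all_order all_algebra.
Set Implicit Arguments. Unset Strict Implicit. Unset Printing Implicit Defensive.

Section Graph.
Variables (T : finType) (adj : rel T).

Definition deg (v : T) : nat := #|[set u | adj v u]|.

Definition edges : {set {set T}} :=
  [set e : {set T} | [exists x, exists y, adj x y && (e == [set x; y])]].

Definition nedges : nat := #|edges|.

Definition edeg (e : {set T}) : nat := (\sum_(x in e) deg x) - 2.

Definition adj_edge_pairs : {set {set {set T}}} :=
  [set P : {set {set T}} | [&& P \subset edges, #|P| == 2 &
                             \bigcap_(e in P) e != set0]].

Definition common_deg (P : {set {set T}}) : nat :=
  if [pick v in \bigcap_(e in P) e] is Some v then deg v else 0.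

Definition M1 : nat := \sum_(v : T) deg v ^ 2.
Definition Fidx : nat := \sum_(v : T) deg v ^ 3.
Definition EM1 : nat := \sum_(e in edges) edeg e ^ 2.
Definition EM2 : nat := \sum_(P in adj_edge_pairs) \prod_(e in P) edeg e.
Definition beta_idx : nat :=
  \sum_(P in adj_edge_pairs) common_deg P * \sum_(e in P) edeg e.

(* v incident (in the paper's sense) to edge e = xy: v ∉ {x,y} and v is
   adjacent to x or to y; Λ(G) is the set of such pairs (v,e). *)
Definition vincident (v : T) (e : {set T}) : bool :=
  (v \notin e) && [exists x in e, adj v x].

Definition gamma_idx : nat :=
  \sum_(v : T) \sum_(e in edges | vincident v e) deg v * \sum_(x in e) deg x.

Definition triangle_free : Prop :=
  forall x y z : T, adj x y -> adj y z -> adj z x -> False.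

End Graph.

From mathcomp Require Import all_boot all_order all_algebra.
From mathcomp Require Import ring zify.
Set Implicit Arguments. Unset Strict Implicit. Unset Printing Implicit Defensive.
Import GRing.Theory Num.Theory.
Local Open Scope ring_scope.

(* Every index in the identity is computed, up to a factor 2,
   as a sum over the vertices x of a polynomial in three local quantities:
   d(x), S1(x) = sum of d(y) over the neighbours y of x, and S2(x) = sum of
   d(y)^2 over the neighbours y of x.
   - Each edge xy is counted twice by the ordered adjacent pairs (x,y)
     ([edge_sum]); this gives 2m and 2EM1, while M1 = sum S1 and F = sum S2
     follow by exchanging a double sum ([sum_nbr_sum]).
   - Each pair of adjacent edges is counted twice by the "cherries"
     (x,(v,y)), i.e. paths v - x - y with v <> y centred at x
     ([adj_pair_sum]); this gives 2EM2 and 2beta.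
   - Each element (w, xy) of Lambda(G) is the image of exactly one cherry
     (x,(w,y)), where x is the end of xy adjacent to w: the other end y is not
     adjacent to w since G has no triangle ([lambda_fiber]); this gives gamma.
   A sum over the cherries centred at x of an expression bilinear in the
   degrees of the two ends has a closed form in d(x), S1(x), S2(x)
   ([sum_nbr_pairs]).  The theorem then follows, after multiplication by 2,
   from a polynomial identity at each vertex. *)

Lemma Posz_sum (I : finType) (P : pred I) (F : I -> nat) :
  (\sum_(i | P i) F i)%N%:Z = \sum_(i | P i) (F i)%:Z.
Proof. by apply: (big_morph Posz) => // a b; rewrite PoszD. Qed.

Lemma Posz_prod (I : finType) (P : pred I) (F : I -> nat) :
  (\prod_(i | P i) F i)%N%:Z = \prod_(i | P i) (F i)%:Z.
Proof. by apply: (big_morph Posz) => // a b; rewrite PoszM. Qed.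

Lemma PoszX (n k : nat) : (n ^ k)%N%:Z = n%:Z ^+ k.
Proof. by rewrite -!natz natrX. Qed.

Lemma sum_over_fibers (I J : finType) (P : pred I) (Q : pred J) (phi : I -> J)
    (k : nat) (F : J -> int) :
  (forall i, P i -> Q (phi i)) ->
  (forall j, Q j -> #|[set i | P i && (phi i == j)]| = k) ->
  \sum_(i | P i) F (phi i) = k%:Z * \sum_(j | Q j) F j.
Proof.
move=> PQ fiber; rewrite (partition_big phi Q) //= mulr_sumr.
apply: eq_bigr => j Qj; rewrite (eq_bigr (fun=> F j)) => [|i /andP[_ /eqP->] //].
rewrite -(fiber j Qj) -natz mulr_natl -sumr_const.
by apply: eq_bigl => i; rewrite inE.
Qed.

Lemma eq_set2 (T : finType) (a b c d : T) :
  ([set a; b] == [set c; d]) = ((a == c) && (b == d)) || ((a == d) && (b == c)).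
Proof.
apply/idP/idP => [/eqP E|]; last first.
  by case/orP => /andP[/eqP-> /eqP->] //; rewrite setUC.
have /set2P[] : a \in [set c; d] by rewrite -E set21.
all: have /set2P[] : b \in [set c; d] by rewrite -E set22.
all: have /set2P[] : c \in [set a; b] by rewrite E set21.
all: have /set2P[] : d \in [set a; b] by rewrite E set22.
all: by move=> *; subst; rewrite ?eqxx ?orbT.
Qed.

Lemma eq_set2l (T : finType) (z a b : T) :
  a != z -> ([set z; a] == [set z; b]) = (a == b).
Proof. by move=> az; rewrite eq_set2 eqxx (negbTE az) andbF orbF. Qed.

Lemma big_set2 (R : Type) (idx : R) (op : Monoid.com_law idx) (I : finType)
    (a b : I) (F : I -> R) :
  a != b -> \big[op/idx]_(i in [set a; b]) F i = op (F a) (F b).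
Proof. by move=> ab; rewrite big_setU1 /= ?big_set1 // inE. Qed.

Section Graph.
Variables (T : finType) (adj : rel T).
Hypotheses (adj_sym : symmetric adj) (adj_irr : irreflexive adj).

Local Notation d x := (deg adj x)%:Z.

Definition S1 (x : T) : int := \sum_(y | adj x y) d y.
Definition S2 (x : T) : int := \sum_(y | adj x y) d y ^+ 2.

Lemma adj_neq x y : adj x y -> x != y.
Proof. by apply: contraTneq => ->; rewrite adj_irr. Qed.

(* The degree of an edge, computed in the integers (no truncation occurs). *)
Lemma edegE a b : adj a b -> (edeg adj [set a; b])%:Z = d a + d b - 2.
Proof.
move=> ab; rewrite /edeg big_set2 ?adj_neq //.
have deg_gt0 x y : adj x y -> (0 < deg adj x)%N.
  by move=> xy; apply/card_gt0P; exists y; rewrite inE.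
have := deg_gt0 _ _ ab; rewrite adj_sym in ab; have := deg_gt0 _ _ ab.
move: (deg adj a) (deg adj b) => m n m_gt0 n_gt0.
have two_le : (2 <= m + n)%N by lia.
by rewrite subzn.
Qed.

Lemma sum_nbr_const x (c : int) : \sum_(y | adj x y) c = c * d x.
Proof.
rewrite (eq_bigl [in [set y | adj x y]]) => [|y]; last by rewrite inE.
by rewrite sumr_const -mulr_natr natz.
Qed.

Lemma sum_nbr_quad x (c0 c1 c2 : int) :
  \sum_(y | adj x y) (c0 + c1 * d y + c2 * d y ^+ 2)
  = c0 * d x + c1 * S1 x + c2 * S2 x.
Proof. by rewrite !big_split /= sum_nbr_const -!mulr_sumr. Qed.

Lemma sum_nbr_other x v (F : T -> int) : adj x v ->
  \sum_(y | adj x y && (v != y)) F y = \sum_(y | adj x y) F y - F v.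
Proof.
move=> xv; rewrite [X in _ = X - _](bigD1 v) //= addrAC subrr add0r.
by apply: eq_bigl => y; rewrite eq_sym.
Qed.

Lemma sum_nbr_pairs x (p0 p1 p2 p3 : int) :
  \sum_(v | adj x v) \sum_(y | adj x y && (v != y))
      (p0 + p1 * d v + p2 * d y + p3 * d v * d y)
  = p0 * (d x - 1) * d x + (p1 + p2) * (d x - 1) * S1 x
    + p3 * (S1 x ^+ 2 - S2 x).
Proof.
have inner v : adj x v ->
    \sum_(y | adj x y && (v != y)) (p0 + p1 * d v + p2 * d y + p3 * d v * d y)
    = (p0 * d x + p2 * S1 x - p0) + (p1 * d x + p3 * S1 x - p1 - p2) * d v
      + (- p3) * d v ^+ 2.
  move=> xv; rewrite sum_nbr_other //.
  rewrite (eq_bigr (fun y => (p0 + p1 * d v) + (p2 + p3 * d v) * d y)) =>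
    [|y _]; last by ring.
  by rewrite big_split /= sum_nbr_const -mulr_sumr -/(S1 x); ring.
rewrite (eq_bigr _ inner) sum_nbr_quad; ring.
Qed.

Lemma sum_nbr_sum (f : T -> int) :
  \sum_x \sum_(y | adj x y) f y = \sum_y f y * d y.
Proof.
rewrite (exchange_big_dep xpredT) //=; apply: eq_bigr => y _.
by rewrite -sum_nbr_const; apply: eq_bigl => x; rewrite adj_sym.
Qed.

Lemma set2_edge a b : adj a b -> [set a; b] \in edges adj.
Proof.
by move=> ab; rewrite inE; apply/existsP; exists a; apply/existsP; exists b;
  rewrite ab eqxx.
Qed.

Lemma edge_at e z : e \in edges adj -> z \in e ->
  exists2 v, adj z v & e = [set z; v].
Proof.
rewrite inE => /existsP[a /existsP[b /andP[ab /eqP->]]].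
by case/set2P => ->; [exists b | exists a; rewrite 1?adj_sym 1?setUC].
Qed.

Lemma edge_fiber e : e \in edges adj ->
  #|[set p : T * T | adj p.1 p.2 && ([set p.1; p.2] == e)]| = 2%N.
Proof.
rewrite inE => /existsP[a /existsP[b /andP[ab /eqP->]]].
rewrite (_ : [set p | _] = [set (a, b); (b, a)]).
  by rewrite cards2 xpair_eqE (negbTE (adj_neq ab)).
apply/setP => -[p q]; rewrite !inE eq_set2 /= !xpair_eqE.
apply/idP/idP => [/andP[_ //]|].
by case/orP => /andP[/eqP-> /eqP->]; rewrite ?ab ?(adj_sym b) ?ab ?eqxx ?orbT.
Qed.

Lemma edge_sum (F : {set T} -> int) :
  2 * \sum_(e in edges adj) F e = \sum_x \sum_(y | adj x y) F [set x; y].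
Proof.
rewrite pair_big_dep /= (@sum_over_fibers _ _ _ (mem (edges adj))
  (fun p : T * T => [set p.1; p.2]) 2) // => [p /= /set2_edge //|e Ee].
by rewrite -(edge_fiber Ee); apply: eq_card => p; rewrite !inE.
Qed.

Lemma nedgesE : 2 * (nedges adj)%:Z = \sum_x d x.
Proof.
rewrite /nedges -natz -sumr_const edge_sum.
by apply: eq_bigr => x _; rewrite sum_nbr_const mul1r.
Qed.

Lemma EM1E : 2 * (EM1 adj)%:Z =
  \sum_x ((d x - 2) ^+ 2 * d x + 2 * (d x - 2) * S1 x + S2 x).
Proof.
rewrite /EM1 Posz_sum.
under eq_bigr do rewrite PoszX.
rewrite edge_sum; apply: eq_bigr => x _.
rewrite (eq_bigr (fun y => (d x - 2) ^+ 2 + 2 * (d x - 2) * d y + 1 * d y ^+ 2)).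
  by rewrite sum_nbr_quad; ring.
by move=> y xy; rewrite edegE //; ring.
Qed.

Lemma M1_sq : (M1 adj)%:Z = \sum_x d x ^+ 2.
Proof. by rewrite /M1 Posz_sum; under eq_bigr do rewrite PoszX. Qed.

Lemma M1E : (M1 adj)%:Z = \sum_x S1 x.
Proof. by rewrite M1_sq /S1 sum_nbr_sum; under eq_bigr do rewrite expr2. Qed.

Lemma FE : (Fidx adj)%:Z = \sum_x S2 x.
Proof.
rewrite /Fidx Posz_sum /S2 sum_nbr_sum.
by under eq_bigr do rewrite PoszX exprSr.
Qed.

(* Cherries: a triple (x,(v,y)) with v, y distinct neighbours of x, i.e. a
   path v - x - y centred at x.  Its two edges xv and xy are adjacent. *)
Definition cherry (t : T * (T * T)) : bool :=
  adj t.1 t.2.1 && (adj t.1 t.2.2 && (t.2.1 != t.2.2)).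

Definition cherry_edges (t : T * (T * T)) : {set {set T}} :=
  [set [set t.1; t.2.1]; [set t.1; t.2.2]].

Lemma cherry_edges_neq t : cherry t -> [set t.1; t.2.1] != [set t.1; t.2.2].
Proof.
case: t => x [v y] /and3P[xv _ vy] /=.
by rewrite eq_set2l // eq_sym adj_neq.
Qed.

Lemma cherry_center t : cherry t -> \bigcap_(e in cherry_edges t) e = [set t.1].
Proof.
move=> ct; rewrite big_set2 ?cherry_edges_neq //.
case: t ct => x [v y] /and3P[_ _ vy] /=; apply/setP => w; rewrite !inE.
by case: eqP => [->|_] //=; apply: contraNF vy => /andP[/eqP<- /eqP<-].
Qed.

Lemma common_deg_cherry t :
  cherry t -> common_deg adj (cherry_edges t) = deg adj t.1.
Proof.
move=> ct; rewrite /common_deg cherry_center //.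
by case: pickP => [w /set1P-> //|/(_ t.1)]; rewrite inE eqxx.
Qed.

Lemma cherry_adj_pair t : cherry t -> cherry_edges t \in adj_edge_pairs adj.
Proof.
move=> ct; rewrite inE cards2 cherry_edges_neq // cherry_center //=.
apply/andP; split; last by apply/set0Pn; exists t.1; rewrite inE.
by apply/subsetP => e /set2P[]->; apply: set2_edge; case/and3P: ct.
Qed.

Lemma cherry_fiber P : P \in adj_edge_pairs adj ->
  #|[set t | cherry t && (cherry_edges t == P)]| = 2%N.
Proof.
rewrite inE => /and3P[sub /cards2P[e [f [ef EP]]] cap]; subst P.
have [Ee Ef] : e \in edges adj /\ f \in edges adj.
  by split; apply: (subsetP sub); rewrite ?set21 ?set22.
move: cap; rewrite big_set2 // => /set0Pn[z /setIP[ze zf]].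
have [v zv Ev] := edge_at Ee ze; have [y zy Ey] := edge_at Ef zf.
subst e f.
have vy : v != y by apply: contraNneq ef => ->.
have ct : cherry (z, (v, y)) by rewrite /cherry /= zv zy vy.
rewrite (_ : [set t | _] = [set (z, (v, y)); (z, (y, v))]).
  by rewrite cards2 !xpair_eqE eqxx (negbTE vy).
apply/setP => -[x [a b]]; rewrite !inE !xpair_eqE; apply/idP/idP; last first.
  case/orP => /and3P[/eqP-> /eqP-> /eqP->]; first by rewrite ct eqxx.
  by rewrite /cherry /= zv zy eq_sym vy /cherry_edges /= setUC eqxx.
case/andP => cxt /eqP E.
have /set1_inj xz : [set x] = [set z].
  by rewrite -(cherry_center cxt) -(cherry_center ct) E.
subst x; case/and3P: cxt => za zb _.
have nz w : adj z w -> w != z by move/adj_neq; rewrite eq_sym.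
by move/eqP: E; rewrite eqxx /cherry_edges /= eq_set2 !eq_set2l ?nz.
Qed.

Lemma adj_pair_sum (F : {set {set T}} -> int) :
  2 * \sum_(P in adj_edge_pairs adj) F P = \sum_(t | cherry t) F (cherry_edges t).
Proof.
rewrite [RHS](@sum_over_fibers _ _ cherry (fun P => P \in adj_edge_pairs adj)
  cherry_edges 2) //.
  exact: cherry_adj_pair.
exact: cherry_fiber.
Qed.

Lemma sum_cherries (p0 p1 p2 p3 : T -> int) :
  \sum_(t | cherry t)
    (p0 t.1 + p1 t.1 * d t.2.1 + p2 t.1 * d t.2.2 + p3 t.1 * d t.2.1 * d t.2.2)
  = \sum_x (p0 x * (d x - 1) * d x + (p1 x + p2 x) * (d x - 1) * S1 x
            + p3 x * (S1 x ^+ 2 - S2 x)).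
Proof.
under [RHS]eq_bigr => x _ do rewrite -sum_nbr_pairs pair_big_dep.
by rewrite pair_big_dep.
Qed.

Lemma EM2E : 2 * (EM2 adj)%:Z =
  \sum_x ((d x - 2) ^+ 2 * (d x - 1) * d x + 2 * (d x - 2) * (d x - 1) * S1 x
          + (S1 x ^+ 2 - S2 x)).
Proof.
rewrite /EM2 Posz_sum; under eq_bigr do rewrite Posz_prod.
rewrite adj_pair_sum (eq_bigr (fun t => (d t.1 - 2) ^+ 2 + (d t.1 - 2) * d t.2.1
  + (d t.1 - 2) * d t.2.2 + 1 * d t.2.1 * d t.2.2)) => [|[x [v y]] ct].
  rewrite (@sum_cherries (fun x => (d x - 2) ^+ 2) (fun x => d x - 2)
    (fun x => d x - 2) (fun=> 1)).
  by apply: eq_bigr => x _; ring.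
rewrite big_set2 ?cherry_edges_neq //.
by case/and3P: ct => xv xy _; rewrite /= !edegE //; ring.
Qed.

Lemma betaE : 2 * (beta_idx adj)%:Z =
  \sum_x (2 * d x * (d x - 2) * (d x - 1) * d x + 2 * d x * (d x - 1) * S1 x).
Proof.
rewrite /beta_idx Posz_sum; under eq_bigr do rewrite PoszM Posz_sum.
rewrite adj_pair_sum (eq_bigr (fun t => 2 * d t.1 * (d t.1 - 2) + d t.1 * d t.2.1
  + d t.1 * d t.2.2 + 0 * d t.2.1 * d t.2.2)) => [|[x [v y]] ct].
  rewrite (@sum_cherries (fun x => 2 * d x * (d x - 2)) (fun x => d x)
    (fun x => d x) (fun=> 0)).
  by apply: eq_bigr => x _; ring.
rewrite common_deg_cherry // big_set2 ?cherry_edges_neq //.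
by case/and3P: ct => xv xy _; rewrite /= !edegE //; ring.
Qed.

Definition cherry_lambda (t : T * (T * T)) : T * {set T} :=
  (t.2.1, [set t.1; t.2.2]).

Lemma cherry_lambda_in t : cherry t ->
  (cherry_lambda t).2 \in edges adj /\
  vincident adj (cherry_lambda t).1 (cherry_lambda t).2.
Proof.
case: t => x [w y] /and3P[xw xy wy] /=; split; first exact: set2_edge.
rewrite /vincident !inE negb_or wy eq_sym adj_neq //=.
by apply/existsP; exists x; rewrite !inE eqxx /= adj_sym.
Qed.

(* In a triangle-free graph every (w, e) in Lambda(G) comes from exactly one
   cherry: its centre is the end of e adjacent to w. *)
Lemma lambda_fiber (tri_free : triangle_free adj) w e :
  e \in edges adj -> vincident adj w e ->
  #|[set t | cherry t && (cherry_lambda t == (w, e))]| = 1%N.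
Proof.
move=> Ee /andP[we /existsP[x /andP[xe wx]]].
have [y xy Exy] := edge_at Ee xe; subst e.
have yw : y != w by apply: contraNneq we => ->; rewrite !inE eqxx orbT.
rewrite (_ : [set t | _] = [set (x, (w, y))]) ?cards1 //.
apply/setP => -[a [b c]]; rewrite !inE /cherry /cherry_lambda /= !xpair_eqE.
apply/idP/idP; last first.
  by case/and3P => /eqP-> /eqP-> /eqP->; rewrite adj_sym wx xy eq_sym yw !eqxx.
case/and3P => /and3P[ab ac bc] /eqP bw; subst b.
rewrite eq_set2 => /orP[] /andP[/eqP ax /eqP cy]; subst a c; rewrite ?eqxx //.
by case: (tri_free _ _ _ ab wx xy).
Qed.

Lemma gammaE (tri_free : triangle_free adj) :
  (gamma_idx adj)%:Z = \sum_x (d x * (d x - 1) * S1 x + (S1 x ^+ 2 - S2 x)).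
Proof.
rewrite /gamma_idx Posz_sum.
under eq_bigr => v _ do rewrite Posz_sum.
under eq_bigr => v _ do under eq_bigr => e _ do rewrite PoszM Posz_sum.
rewrite pair_big_dep -[LHS]mul1r.
rewrite -(@sum_over_fibers _ _ cherry _ cherry_lambda 1
  (fun j => d j.1 * \sum_(i in j.2) d i)); first last.
- by move=> [w e] /= /andP[Ee /(lambda_fiber tri_free Ee)].
- by move=> t /cherry_lambda_in[Ee vinc]; rewrite Ee.
rewrite (eq_bigr (fun t => 0 + d t.1 * d t.2.1 + 0 * d t.2.2
  + 1 * d t.2.1 * d t.2.2)) => [|[x [w y]] /and3P[xw xy _]].
  rewrite (@sum_cherries (fun=> 0) (fun x => d x) (fun=> 0) (fun=> 1)).
  by apply: eq_bigr => x _; ring.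
by rewrite /= big_set2 ?adj_neq //; ring.
Qed.

End Graph.

Theorem lemma2p6 (T : finType) (adj : rel T)
  (adj_sym : symmetric adj) (adj_irr : irreflexive adj)
  (girth_gt3 : triangle_free adj) :
  (gamma_idx adj)%:Z =
    2 * (EM2 adj)%:Z - (beta_idx adj)%:Z + 4 * (EM1 adj)%:Z
    - 2 * (Fidx adj)%:Z + 6 * (M1 adj)%:Z - 8 * (nedges adj)%:Z.
Proof.
(* After doubling, each index is replaced by its vertex-sum formula; the
   term 12 M1 is split as 8 (sum of S1) + 4 (sum of d^2), and the identity
   holds vertex by vertex. *)
apply: (@mulfI _ 2) => //.
have -> : 2 * (2 * (EM2 adj)%:Z - (beta_idx adj)%:Z + 4 * (EM1 adj)%:Z
    - 2 * (Fidx adj)%:Z + 6 * (M1 adj)%:Z - 8 * (nedges adj)%:Z) =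
  2 * (2 * (EM2 adj)%:Z) - 2 * (beta_idx adj)%:Z + 4 * (2 * (EM1 adj)%:Z)
    - 4 * (Fidx adj)%:Z + 8 * (M1 adj)%:Z + 4 * (M1 adj)%:Z
    - 8 * (2 * (nedges adj)%:Z) by ring.
rewrite [in 8 * _]M1E // M1_sq gammaE // EM2E // betaE // EM1E // FE //.
rewrite nedgesE //.
rewrite !mulr_sumr -!(sumrB, big_split) /=.
by apply: eq_bigr => x _; ring.
Qed.
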